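(* Let $Q=\langle b\rangle\ltimes_{(g,\gamma)}X$. Then $$1\times\langle\mathrm{Img}(\gamma)\rangle=A(Q)\le C(Q)=Q'=1\times\langle\mathrm{Img}(\gamma)\cup\mathrm{Img}(1-g)\rangle,$$ where $\langle S\rangle$ denotes the subgroup of $(X,+)$ generated by $S$ and $\mathrm{Img}(1-g)=\{x-g(x):x\in X\}$.
   Context: Let $(X,+)$ be an abelian group and $(g,\gamma)$ a construction pair on it: $g$ a permutation of $X$, $\gamma:X\times X\to X$ symmetric, alternating, biadditive, with (C1) $g^{-1}(g(x)+g(y))=x+y+\gamma(x,y)+g^{-1}(\gamma(x,y))+g^{-2}(\gamma(x,y))$, (C2) $\gamma(\gamma(x,y),z)=0$, (C3) $g^{-1}(\gamma(x,y))=\gamma(g(x),y)$ for all $x,y,z$. Let $\mathrm{Rad}(\gamma)=\{x:\gamma(x,y)=0\ \forall y\}$, $\mathrm{Img}(\gamma)$ the image of $\gamma$, and $r(g,\gamma)$ the least positive $r$ with $\sum_{0\le k<r}g^k(x)\in\mathrm{Rad}(\gamma)$ for all $x$ ($\infty$ if none). $I(i,j)$ is $\emptyset$ if $i=j$, $\{i,\dots,j-1\}$ if $i<j$, $\{j,\dots,i-1\}$ if $j<i$. For a cyclic group $C=\langle b\rangle$ such that (if finite) $|g|$ and $r(g,\gamma)$ divide $|C|$, $C\ltimes_{(g,\gamma)}X$ is the Moufang loop on $C\times X$ with multiplication $(b^i,x)(b^j,y)=(b^{i+j},g^{-j}(x)+y+\sum_{k\in I(i+j,-j)}g^{-k}(\gamma(x,y)))$.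 For a loop $Q$, the commutator subloop $C(Q)$ (resp. associator subloop $A(Q)$, resp. derived subloop $Q'$) is the smallest normal subloop $N$ such that $Q/N$ is commutative (resp. a group, resp. an abelian group). *)

From mathcomp Require Import all_boot all_order all_algebra.
Set Implicit Arguments. Unset Strict Implicit. Unset Printing Implicit Defensive.
Import Order.TTheory GRing.Theory Num.Theory.
Local Open Scope ring_scope.

Section LoopNotions.
Variables (T : Type) (mul : T -> T -> T) (e : T).

Definition set_eq (A B : T -> Prop) := forall z, A z <-> B z.
Definition set_sub (A B : T -> Prop) := forall z, A z -> B z.

Definition lcoset (x : T) (N : T -> Prop) : T -> Prop :=
  fun z => exists a, N a /\ z = mul x a.
Definition rcoset (N : T -> Prop) (x : T) : T -> Prop :=
  fun z => exists a, N a /\ z = mul a x.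
Definition rrcoset (N : T -> Prop) (x y : T) : T -> Prop :=
  fun z => exists a, N a /\ z = mul (mul a x) y.
Definition llcoset (y x : T) (N : T -> Prop) : T -> Prop :=
  fun z => exists a, N a /\ z = mul y (mul x a).

Definition subloop (N : T -> Prop) : Prop :=
  [/\ N e,
      (forall a b, N a -> N b -> N (mul a b)),
      (forall a b x, N a -> N b -> mul a x = b -> N x) &
      (forall a b x, N a -> N b -> mul x a = b -> N x)].

Definition normal_subloop (N : T -> Prop) : Prop :=
  subloop N /\
  forall x y, [/\ set_eq (lcoset x N) (rcoset N x),
                  set_eq (rrcoset N x y) (rcoset N (mul x y)) &
                  set_eq (llcoset y x N) (lcoset (mul y x) N)].

(* Properties of the quotient loop Q/N, whose elements are the cosets xN
   with (xN)(yN) = (xy)N. *)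
Definition quot_commutative (N : T -> Prop) : Prop :=
  forall x y, set_eq (lcoset (mul x y) N) (lcoset (mul y x) N).
Definition quot_associative (N : T -> Prop) : Prop :=
  forall x y z, set_eq (lcoset (mul (mul x y) z) N) (lcoset (mul x (mul y z)) N).
(* a loop is a group iff it is associative *)
Definition quot_group (N : T -> Prop) : Prop := quot_associative N.
Definition quot_abelian_group (N : T -> Prop) : Prop :=
  quot_associative N /\ quot_commutative N.

Definition smallest_normal (P : (T -> Prop) -> Prop) (N : T -> Prop) : Prop :=
  [/\ normal_subloop N, P N &
      forall M, normal_subloop M -> P M -> set_sub N M].

Definition is_commutator_subloop := smallest_normal quot_commutative.
Definition is_associator_subloop := smallest_normal quot_group.
Definition is_derived_subloop := smallest_normal quot_abelian_group.
End LoopNotions.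

Section Construction.
Variable X : zmodType.

Definition gpow (g ginv : X -> X) (k : int) : X -> X :=
  match k with
  | Posz m => iter m g
  | Negz m => iter m.+1 ginv
  end.

Definition Irange (i j : int) : seq int :=
  [seq Num.min i j + (k%:Z) | k <- iota 0 `|i - j|%N].

Definition Rad (gam : X -> X -> X) (x : X) : Prop := forall y, gam x y = 0.

Definition add_subgroup (H : X -> Prop) : Prop :=
  [/\ H 0, (forall a b, H a -> H b -> H (a + b)) & (forall a, H a -> H (- a))].
Definition gen_subgroup (S : X -> Prop) (x : X) : Prop :=
  forall H, add_subgroup H -> (forall s, S s -> H s) -> H x.

Definition Img_gam (gam : X -> X -> X) (z : X) : Prop := exists x y, z = gam x y.
Definition Img_1mg (g : X -> X) (z : X) : Prop := exists x, z = x - g x.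

Definition order_divides (g : X -> X) (n : nat) : Prop :=
  exists m : nat, [/\ (0 < m)%N, (forall x, iter m g x = x),
                     (forall k, (0 < k < m)%N -> ~ (forall x, iter k g x = x)) &
                     (m %| n)%N].

Definition r_prop (g : X -> X) (gam : X -> X -> X) (r : nat) : Prop :=
  forall x, Rad gam (\sum_(k < r) iter k g x).

Definition r_divides (g : X -> X) (gam : X -> X -> X) (n : nat) : Prop :=
  exists r : nat, [/\ (0 < r)%N, r_prop g gam r,
                     (forall k, (0 < k < r)%N -> ~ r_prop g gam k) &
                     (r %| n)%N].

(* the cyclic group C = <b> of order n (n = 0 : infinite cyclic);
   b^i is represented by the integer i with i = i mod n *)
Definition Cyc (n : nat) := {i : int | intdiv.modz i n == i}.

Lemma Cyc_modP (n : nat) (i : int) : intdiv.modz (intdiv.modz i n) n == intdiv.modz i n.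
Proof. by apply/eqP; rewrite modz_mod. Qed.

Definition cyc_of (n : nat) (i : int) : Cyc n := exist _ (intdiv.modz i n) (Cyc_modP n i).

Definition sdmul (g ginv : X -> X) (gam : X -> X -> X) (n : nat)
    (p q : Cyc n * X) : Cyc n * X :=
  let i := sval p.1 in let x := p.2 in
  let j := sval q.1 in let y := q.2 in
  (cyc_of n (i + j),
   gpow g ginv (- j) x + y +
   \sum_(k <- Irange (i + j) (- j)) gpow g ginv (- k) (gam x y)).

Definition sdone (n : nat) : Cyc n * X := (cyc_of n 0, 0).

Definition one_times (n : nat) (S : X -> Prop) (p : Cyc n * X) : Prop :=
  sval p.1 = 0 /\ gen_subgroup S p.2.
End Construction.

From mathcomp Require Import all_boot all_order all_algebra.
Import GRing.Theory.
Local Open Scope ring_scope.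

(* Let G be the subgroup generated by Img gam. By (C2) it lies in Rad gam, and by (C1) and
   (C3) it is stable under g and g^-1, which are additive modulo G and exactly additive along G.
   Hence for every subgroup H containing G and stable under g and g^-1, "same C-component and
   X-components congruent modulo H" is a congruence of Q whose class of the identity is 1 x H.
   So 1 x H is a normal subloop; the quotient is associative because |g| divides |C|, and it is
   commutative as soon as Img(1 - g) is contained in H. Conversely, let M be a normal subloop.
   If Q/M is a group, the associator of (1, g a), (1, g b), (b, 0) puts gam a b in M; if Q/M
   is commutative, comparing (1, x)(b, y) with (b, y)(1, x) puts gam a b and x - g x in M.
   When |C| = 1 the hypotheses force g = id and gam = 0. *)

Set Implicit Arguments. Unset Strict Implicit.

Ltac abel_cancel t :=
  rewrite ?[t + _]addrC; repeat rewrite [_ + t + _]addrAC;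
  rewrite ?[(- t) + _]addrC; repeat rewrite [_ + (- t) + _]addrAC;
  first [rewrite addrK | rewrite subrr].

(* Identities of abelian groups: every atom [- t] of [LHS - RHS] is cancelled against a [t]. *)
Ltac abel := apply/eqP; rewrite -subr_eq0 ?opprD ?opprK ?oppr0 ?addr0 ?addrA;
  repeat match goal with |- context [- ?t] => abel_cancel t end.

Section SetEq.
Variable T : Type.
Implicit Types A B C : T -> Prop.

Lemma set_eq_sym A B : set_eq A B -> set_eq B A.
Proof. by move=> AB z; split=> /AB. Qed.

Lemma set_eq_trans A B C : set_eq A B -> set_eq B C -> set_eq A C.
Proof. by move=> AB BC z; split=> [/AB/BC | /BC/AB]. Qed.

End SetEq.

Section Subgroups.
Variable X : zmodType.
Implicit Types (H S : X -> Prop) (f : X -> X).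

Section OneSubgroup.
Variables (H : X -> Prop) (subH : add_subgroup H).

Lemma add_subgroup0 : H 0. Proof. by case: subH. Qed.

Lemma add_subgroupD a b : H a -> H b -> H (a + b).
Proof. by case: subH => _ addH _; apply: addH. Qed.

Lemma add_subgroupN a : H a -> H (- a).
Proof. by case: subH => _ _ oppH; apply: oppH. Qed.

Lemma add_subgroupB a b : H a -> H b -> H (a - b).
Proof. by move=> Ha Hb; apply/add_subgroupD/add_subgroupN. Qed.

End OneSubgroup.

Lemma preim_subgroup H f : add_subgroup H -> f 0 = 0 ->
  (forall u v, H (f (u + v) - f u - f v)) -> add_subgroup (fun c => H (f c)).
Proof.
move=> subH f0 fB; split=> [|a b Ha Hb|a Ha]; first by rewrite f0; apply: add_subgroup0.
- have -> : f (a + b) = f a + f b + (f (a + b) - f a - f b) by abel.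
  by do 2 apply: add_subgroupD => //.
- have := add_subgroupD subH (add_subgroupN subH Ha) (add_subgroupN subH (fB a (- a))).
  by rewrite subrr f0; congr H; abel.
Qed.

Lemma gen_subgroup_subgroup S : add_subgroup (gen_subgroup S).
Proof.
split=> [H subH _ | a b Ha Hb H subH SH | a Ha H subH SH].
- exact: add_subgroup0.
- by apply: add_subgroupD => //; [apply: Ha | apply: Hb].
- by apply: add_subgroupN => //; apply: Ha.
Qed.

Lemma gen_subgroup_in S s : S s -> gen_subgroup S s.
Proof. by move=> Ss H _; apply. Qed.

Lemma gen_subgroup_min S H : add_subgroup H -> (forall s, S s -> H s) ->
  forall x, gen_subgroup S x -> H x.
Proof. by move=> subH SH x; apply. Qed.

Lemma gen_subgroup_mono S S' : (forall s, S s -> S' s) ->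
  forall x, gen_subgroup S x -> gen_subgroup S' x.
Proof.
move=> SS'; apply: gen_subgroup_min; first exact: gen_subgroup_subgroup.
by move=> s /SS'; apply: gen_subgroup_in.
Qed.

Section AdditiveModulo.
Variables (K : X -> Prop) (subK : add_subgroup K).

Definition additive_mod f :=
  [/\ f 0 = 0, forall u c, K c -> f (u + c) = f u + f c,
      forall c, K c -> K (f c) & forall u v, K (f (u + v) - f u - f v)].

Lemma additive_mod_id : additive_mod id.
Proof.
split=> // u v /=; have -> : u + v - u - v = 0 by abel.
exact: add_subgroup0.
Qed.

Lemma additive_mod_comp f h : additive_mod f -> additive_mod h -> additive_mod (f \o h).
Proof.
case=> f0 fD fK fB [h0 hD hK hB]; split=> /= [|u c Kc|c Kc|u v].
- by rewrite h0 f0.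
- by rewrite hD // fD //; apply: hK.
- exact/fK/hK.
- set d := h (u + v) - h u - h v; have -> : h (u + v) = h u + h v + d by rewrite /d; abel.
  rewrite fD; last exact: hB.
  have -> : f (h u + h v) + f d - f (h u) - f (h v) = f (h u + h v) - f (h u) - f (h v) + f d.
    by abel.
  by apply: add_subgroupD => //; apply/fK/hB.
Qed.

Lemma additive_mod_iter f m : additive_mod f -> additive_mod (iter m f).
Proof.
move=> addf; elim: m => [|m IHm]; first exact: additive_mod_id.
exact: additive_mod_comp addf IHm.
Qed.

Lemma additive_modB f a b : additive_mod f -> K (f (a - b) - (f a - f b)).
Proof.
case=> f0 _ _ fB.
have := add_subgroupD subK (fB a (- b)) (add_subgroupN subK (fB b (- b))).
by rewrite subrr f0; congr K; abel.
Qed.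

Lemma additive_mod_congr H f : add_subgroup H -> (forall c, K c -> H c) ->
  (forall c, H c -> H (f c)) -> additive_mod f ->
  forall a b, H (a - b) -> H (f a - f b).
Proof.
move=> subH KH Hf addf a b Hab.
have -> : f a - f b = f (a - b) - (f (a - b) - (f a - f b)) by abel.
by apply: add_subgroupB => //; [apply: Hf | apply/KH/additive_modB].
Qed.

Lemma additive_mod_gen S f : (forall c, K c -> gen_subgroup S c) ->
  (forall s, S s -> gen_subgroup S (f s)) -> additive_mod f ->
  forall c, gen_subgroup S c -> gen_subgroup S (f c).
Proof.
move=> KS Sf [f0 _ _ fB]; apply: gen_subgroup_min Sf.
exact: preim_subgroup (gen_subgroup_subgroup S) f0 (fun u v => KS _ (fB u v)).
Qed.

End AdditiveModulo.
End Subgroups.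

Lemma iter_cancel (T : Type) (f h : T -> T) m : cancel f h -> cancel (iter m f) (iter m h).
Proof. by move=> fK; elim: m => [|m IHm] x //; rewrite iterSr iterS fK IHm. Qed.

Section IntPowers.
Variable X : zmodType.
Implicit Types f h : X -> X.

Lemma gpowN f h k x : gpow f h (- k) x = gpow h f k x.
Proof. by case: k => [[|m]|m]. Qed.

Lemma gpow_subn f h m p x : cancel h f ->
  gpow f h (m%:Z - p%:Z) x = iter m f (iter p h x).
Proof.
move=> hK; case: (leqP p m) => [le_pm | /ltnW le_mp].
  by rewrite -(subnK le_pm) PoszD addrK ssrnat.iterD iter_cancel.
by rewrite -(subnKC le_mp) PoszD opprD addrA subrr add0r gpowN ssrnat.iterD iter_cancel.
Qed.

Lemma gpowD f h a b x : cancel f h -> cancel h f ->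
  gpow f h (a + b) x = gpow f h a (gpow f h b x).
Proof.
move=> fK hK; case: a b => [m|m] [p|p]; rewrite ?NegzE.
- by rewrite -PoszD /= ssrnat.iterD.
- by rewrite gpow_subn.
- by rewrite addrC -opprB !gpowN gpow_subn.
- by rewrite -opprD -PoszD !gpowN; exact: ssrnat.iterD.
Qed.

Section Invertible.
Variables (f h : X -> X) (fK : cancel f h) (hK : cancel h f).

Lemma gpowK k : cancel (gpow f h k) (gpow f h (- k)).
Proof. by move=> x; rewrite -gpowD // addNr. Qed.

Lemma gpowKN k : cancel (gpow f h (- k)) (gpow f h k).
Proof. by move=> x; rewrite -gpowD // addrN. Qed.

Lemma gpow_modz n k x : ((0 < n)%N -> forall y, iter n f y = y) ->
  gpow f h (intdiv.modz k n) x = gpow f h k x.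
Proof.
move=> fn; case: (posnP n) => [->|n_gt0]; first by rewrite intdiv.modz0.
have f_n y q : iter (q * n) f y = y.
  by elim: q => [|q IHq] //; rewrite mulSn ssrnat.iterD IHq fn.
have h_n y q : iter (q * n) h y = y by rewrite -{1}(f_n y q) iter_cancel.
transitivity (gpow f h (intdiv.modz k n) (gpow f h (intdiv.divz k n * n) x)).
  congr (gpow f h _ _); case: (intdiv.divz k n) => q.
    by rewrite -PoszM; symmetry; apply: f_n.
  by rewrite NegzE mulNr -PoszM gpowN; symmetry; apply: h_n.
by rewrite -gpowD // addrC -intdiv.divz_eq.
Qed.

End Invertible.
End IntPowers.

Section ConstructionPair.
Variables (X : zmodType) (g ginv : X -> X) (gam : X -> X -> X).
Hypotheses (g_ginv : cancel g ginv) (ginv_g : cancel ginv g)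
  (gam_sym : forall x y, gam x y = gam y x)
  (gam_alt : forall x, gam x x = 0)
  (gam_addl : forall x y z, gam (x + y) z = gam x z + gam y z)
  (gam_addr : forall x y z, gam x (y + z) = gam x y + gam x z)
  (C1 : forall x y, ginv (g x + g y)
          = x + y + gam x y + ginv (gam x y) + ginv (ginv (gam x y)))
  (C2 : forall x y z, gam (gam x y) z = 0)
  (C3 : forall x y, ginv (gam x y) = gam (g x) y).

Lemma gam0r x : gam x 0 = 0.
Proof. by apply: (addrI (gam x 0)); rewrite -gam_addr !addr0. Qed.

Lemma gamNr x y : gam x (- y) = - gam x y.
Proof. by apply/eqP; rewrite -addr_eq0 -gam_addr addNr gam0r. Qed.

Lemma g_gam x y : g (gam x y) = gam (ginv x) y.
Proof. by rewrite -{1}(ginv_g x) -C3 ginv_g. Qed.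

Lemma ginv0 : ginv 0 = 0.
Proof. by rewrite -(gam0r 0) C3 gam0r. Qed.

Lemma g0 : g 0 = 0.
Proof. by rewrite -{1}ginv0 ginv_g. Qed.

Definition gamspan := gen_subgroup (Img_gam gam).

Lemma gamspan_subgroup : add_subgroup gamspan.
Proof. exact: gen_subgroup_subgroup. Qed.

Lemma gamspan_gam a b : gamspan (gam a b).
Proof. by apply: gen_subgroup_in; exists a, b. Qed.

Lemma gam_gamspanr a c : gamspan c -> gam a c = 0.
Proof.
move: c; apply: gen_subgroup_min => [|_ [x [y ->]]]; last by rewrite gam_sym C2.
split=> [|x y hx hy|x hx]; first exact: gam0r.
- by rewrite gam_addr hx hy addr0.
- by rewrite gamNr hx oppr0.
Qed.

Lemma gam_gamr a b c : gam a (gam b c) = 0.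
Proof. by rewrite gam_sym C2. Qed.

Lemma gam_gamspanl a c : gamspan c -> gam c a = 0.
Proof. by rewrite gam_sym; apply: gam_gamspanr. Qed.

Lemma ginvD_gamspan u v : gamspan (ginv (u + v) - ginv u - ginv v).
Proof.
rewrite -{1}(ginv_g u) -{1}(ginv_g v) C1 !C3.
set w := gam (ginv u) (ginv v).
have -> : ginv u + ginv v + w + gam (g (ginv u)) (ginv v) + gam (g (g (ginv u))) (ginv v)
          - ginv u - ginv v = w + gam (g (ginv u)) (ginv v) + gam (g (g (ginv u))) (ginv v).
  by abel.
by do 2 ?apply: (add_subgroupD gamspan_subgroup); apply: gamspan_gam.
Qed.

Lemma gamspan_ginv c : gamspan c -> gamspan (ginv c).
Proof.
move: c; apply: gen_subgroup_min => [|_ [x [y ->]]]; last by rewrite C3; apply: gamspan_gam.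
exact: preim_subgroup gamspan_subgroup ginv0 ginvD_gamspan.
Qed.

Lemma ginvD_span u c : gamspan c -> ginv (u + c) = ginv u + ginv c.
Proof.
move=> Gc; rewrite -{1}(ginv_g u) -{1}(ginv_g c) C1.
by rewrite (gam_gamspanr _ (gamspan_ginv Gc)) ginv0 ginv0 !addr0.
Qed.

Lemma gD_span u c : gamspan c -> g (u + c) = g u + g c.
Proof.
move=> Gc; apply: (can_inj ginv_g).
by rewrite g_ginv C1 (gam_gamspanr _ Gc) ginv0 ginv0 !addr0.
Qed.

Lemma gamspan_g c : gamspan c -> gamspan (g c).
Proof.
(* Carrying [gamspan c] along the induction lets [gD_span] apply. *)
move=> Gc; suff [] : gamspan c /\ gamspan (g c) by [].
move: c Gc; apply: gen_subgroup_min => [|_ [x [y ->]]]; last first.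
  by rewrite g_gam; split; apply: gamspan_gam.
have subG := gamspan_subgroup.
split=> [|a b [Ga Gga] [Gb Ggb]|a [Ga Gga]].
- by rewrite g0; split; apply: (add_subgroup0 subG).
- by rewrite gD_span //; split; apply: (add_subgroupD subG).
- have gN : g (- a) = - g a.
    apply/eqP; rewrite -addr_eq0 addrC -gD_span ?subrr ?g0 //.
    exact: (add_subgroupN subG).
  by rewrite gN; split; apply: (add_subgroupN subG).
Qed.

Lemma gD_gamspan u v : gamspan (g (u + v) - g u - g v).
Proof.
have := ginvD_gamspan (g u) (g v); rewrite !g_ginv; set c := _ - u - v => Gc.
have guv : g u + g v = g (u + v) + g c.
  by rewrite -[RHS]gD_span // -[g u + g v]ginv_g; congr g; rewrite /c; abel.
have -> : g (u + v) - g u - g v = - g c by rewrite -addrA -opprD guv; abel.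
exact: (add_subgroupN gamspan_subgroup (gamspan_g Gc)).
Qed.

Lemma g_additive_mod : additive_mod gamspan g.
Proof. split; [exact: g0 | exact: gD_span | exact: gamspan_g | exact: gD_gamspan]. Qed.

Lemma ginv_additive_mod : additive_mod gamspan ginv.
Proof. split; [exact: ginv0 | exact: ginvD_span | exact: gamspan_ginv | exact: ginvD_gamspan]. Qed.

Local Notation gp := (gpow g ginv).

Lemma gpow_additive_mod k : additive_mod gamspan (gp k).
Proof.
case: k => m; apply: (additive_mod_iter gamspan_subgroup).
  exact: g_additive_mod.
exact: ginv_additive_mod.
Qed.

Lemma gpow0 k : gp k 0 = 0.
Proof. by case: (gpow_additive_mod k). Qed.

Lemma gpowD_span k u c : gamspan c -> gp k (u + c) = gp k u + gp k c.
Proof. by case: (gpow_additive_mod k) => _ gpD _ _; apply: gpD. Qed.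

Lemma gamspan_gpow k c : gamspan c -> gamspan (gp k c).
Proof. by case: (gpow_additive_mod k) => _ _ gpG _; apply: gpG. Qed.

Definition twist (s : seq int) x y := \sum_(k <- s) gp (- k) (gam x y).
Arguments twist : simpl never.

Lemma twist_gamspan s x y : gamspan (twist s x y).
Proof.
apply: (big_ind gamspan); first exact: (add_subgroup0 gamspan_subgroup).
  exact: (add_subgroupD gamspan_subgroup).
by move=> k _; exact: gamspan_gpow (gamspan_gam _ _).
Qed.

Lemma twist_gam0 s x y : gam x y = 0 -> twist s x y = 0.
Proof. by move=> gam0; apply: big1 => k _; rewrite gam0 gpow0. Qed.

Lemma twist_addl s x1 x2 y : twist s (x1 + x2) y = twist s x1 y + twist s x2 y.
Proof.
rewrite -big_split; apply: eq_bigr => k _.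
by rewrite gam_addl gpowD_span //; apply: gamspan_gam.
Qed.

Lemma twist_addr s x y1 y2 : twist s x (y1 + y2) = twist s x y1 + twist s x y2.
Proof.
rewrite -big_split; apply: eq_bigr => k _.
by rewrite gam_addr gpowD_span //; apply: gamspan_gam.
Qed.

Lemma twist_spanl s x1 x2 y : gamspan (x1 - x2) -> twist s x1 y = twist s x2 y.
Proof.
by move=> G12; rewrite -[x1](subrK x2) twist_addl twist_gam0 ?add0r ?gam_gamspanl.
Qed.

Section Loop.
Variable n : nat.
Local Notation Q := (Cyc n * X)%type.
Local Notation mul := (sdmul g ginv gam (n := n)).
Local Notation e := (sdone X n).
Local Notation c0 := (cyc_of n 0).
Implicit Types p q r x y z : Q.

Lemma sdmulE p q : mul p q = (cyc_of n (sval p.1 + sval q.1),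
  gp (- sval q.1) p.2 + q.2 + twist (Irange (sval p.1 + sval q.1) (- sval q.1)) p.2 q.2).
Proof. by []. Qed.

Lemma cyc_ofK (c : Cyc n) : cyc_of n (sval c) = c.
Proof. by apply: val_inj; apply/eqP; apply: (svalP c). Qed.

Lemma sval_cyc0 : sval c0 = 0.
Proof. exact: intdiv.mod0z. Qed.

Lemma sdmul1l p : mul e p = p.
Proof.
case: p => c x; rewrite sdmulE sval_cyc0 add0r cyc_ofK gpow0 add0r.
by rewrite twist_gam0 ?addr0 // gam_sym gam0r.
Qed.

Lemma sdmul1r p : mul p e = p.
Proof.
case: p => c x; rewrite sdmulE sval_cyc0 addr0 cyc_ofK oppr0 addr0.
by rewrite twist_gam0 ?addr0 // gam0r.
Qed.

Lemma sdmul00 a b : mul (c0, a) (c0, b) = (c0, a + b).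
Proof. by rewrite sdmulE sval_cyc0 addr0 oppr0 /twist /= big_nil addr0. Qed.

Lemma cyc0P (c : Cyc n) : sval c = 0 -> c = c0.
Proof. by move=> c_eq0; apply: val_inj => /=; rewrite c_eq0 intdiv.mod0z. Qed.

Lemma cyc_addr_eq0 (c k : Cyc n) : sval (cyc_of n (sval c + sval k)) = sval c -> sval k = 0.
Proof.
move=> /= ck; rewrite -(eqP (svalP k)) -[sval k](addKr (sval c)) -intdiv.modzDmr.
by rewrite ck addNr intdiv.mod0z.
Qed.

Lemma Irange10 : Irange 1 0 = [:: 0]. Proof. by []. Qed.

Lemma Irange1N1 : Irange 1 (-1) = [:: -1; 0]. Proof. by []. Qed.

Section Congruence.
Variable S : X -> Prop.
Local Notation H := (gen_subgroup S).
Local Notation subH := (gen_subgroup_subgroup S).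
Hypotheses (gamspan_H : forall c, gamspan c -> H c)
  (H_g : forall c, H c -> H (g c)) (H_ginv : forall c, H c -> H (ginv c)).

Definition eqH a b := H (a - b).

Lemma eqH_refl a : eqH a a.
Proof. by rewrite /eqH subrr; apply: (add_subgroup0 subH). Qed.

Lemma eqH_sym a b : eqH a b -> eqH b a.
Proof. by move=> ab; rewrite /eqH -opprB; exact: (add_subgroupN subH ab). Qed.

Lemma eqH_trans a b c : eqH a b -> eqH b c -> eqH a c.
Proof. by move=> ab bc; have := add_subgroupD subH ab bc; rewrite addrA subrK. Qed.

Lemma eqH_add a b a' b' : eqH a a' -> eqH b b' -> eqH (a + b) (a' + b').
Proof. by move=> aa' bb'; rewrite /eqH opprD addrACA; exact: (add_subgroupD subH aa' bb'). Qed.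

Lemma eqH_span a b : gamspan (a - b) -> eqH a b.
Proof. exact: gamspan_H. Qed.

Lemma eqH_spanD a c : gamspan c -> eqH (a + c) a.
Proof. by move=> Gc; apply: eqH_span; rewrite addrAC subrr add0r. Qed.

Lemma eqH_twist s a b s' a' b' : eqH (twist s a b) (twist s' a' b').
Proof.
exact: eqH_span (add_subgroupB gamspan_subgroup (twist_gamspan _ _ _) (twist_gamspan _ _ _)).
Qed.

Lemma H_gpow k c : H c -> H (gp k c).
Proof.
have H_iter f m : (forall c, H c -> H (f c)) -> H c -> H (iter m f c).
  by move=> Hf Hc; elim: m => [|m IHm] //=; apply: Hf.
by case: k => m; apply: H_iter.
Qed.

Lemma eqH_gpow k a b : eqH a b -> eqH (gp k a) (gp k b).
Proof.
apply: (additive_mod_congr gamspan_subgroup subH) => //; first exact: H_gpow.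
exact: gpow_additive_mod.
Qed.

Definition cong p q := sval p.1 = sval q.1 /\ eqH p.2 q.2.

Lemma cong_refl p : cong p p.
Proof. by split=> //; apply: eqH_refl. Qed.

Lemma cong_sym p q : cong p q -> cong q p.
Proof. by case=> p1q1 pq2; split=> //; apply: eqH_sym. Qed.

Lemma cong_trans p q r : cong p q -> cong q r -> cong p r.
Proof. by case=> pq1 pq2 [qr1 qr2]; split; [rewrite pq1 | apply: eqH_trans qr2]. Qed.

Lemma cong_mull x y r : cong x r -> cong (mul x y) (mul r y).
Proof.
case: x r => [x1 x2] [r1 r2] [/= /val_inj<- xr2]; rewrite !sdmulE /=; split=> //.
by apply: eqH_add; [apply: eqH_add; [apply: eqH_gpow | apply: eqH_refl] | apply: eqH_twist].
Qed.

Lemma cong_mulr y x r : cong x r -> cong (mul y x) (mul y r).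
Proof.
case: x r => [x1 x2] [r1 r2] [/= /val_inj<- xr2]; rewrite !sdmulE /=; split=> //.
by apply: eqH_add; [apply: eqH_add; [apply: eqH_refl | ] | apply: eqH_twist].
Qed.

Lemma cong_mull_div x y z : cong (mul x y) z -> exists2 r, cong x r & mul r y = z.
Proof.
case: x y z => [x1 x2] [y1 y2] [z1 z2] [/val_inj xyz1 xyz2] /=.
set j := sval y1; set s := Irange (sval x1 + j) (- j) in xyz2 *.
set w := z2 - y2; set d := twist s (gp j w) y2.
exists (x1, gp j (w - d)).
  split=> //=; rewrite -[x2](gpowKN g_ginv ginv_g j); apply: eqH_gpow.
  rewrite /eqH; have -> : gp (- j) x2 - (w - d)
                          = gp (- j) x2 + y2 + twist s x2 y2 + d - (z2 + twist s x2 y2).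
    by rewrite /w; abel.
  exact: (eqH_add xyz2 (eqH_twist _ _ _ _ _ _)).
move: xyz1; rewrite sdmulE /= => <-; rewrite sdmulE /= -/j -/s gpowK //; congr pair.
have -> : twist s (gp j (w - d)) y2 = d.
  have Gd : gamspan (- d) := add_subgroupN gamspan_subgroup (twist_gamspan _ _ _).
  by apply: twist_spanl; rewrite gpowD_span // addrAC subrr add0r; apply: gamspan_gpow.
by rewrite /w; abel.
Qed.

Lemma cong_mulr_div y x z : cong (mul y x) z -> exists2 r, cong x r & mul y r = z.
Proof.
case: x y z => [x1 x2] [y1 y2] [z1 z2] [/val_inj xyz1 xyz2] /=.
set j := sval x1; set s := Irange (sval y1 + j) (- j) in xyz2 *.
set w := z2 - gp (- j) y2; set d := twist s y2 w.
exists (x1, w - d).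
  split=> //=; rewrite /eqH.
  have -> : x2 - (w - d) = gp (- j) y2 + x2 + twist s y2 x2 + d - (z2 + twist s y2 x2).
    by rewrite /w; abel.
  exact: (eqH_add xyz2 (eqH_twist _ _ _ _ _ _)).
move: xyz1; rewrite sdmulE /= => <-; rewrite sdmulE /= -/j -/s; congr pair.
have Gd : gamspan (- d) := add_subgroupN gamspan_subgroup (twist_gamspan _ _ _).
by rewrite twist_addr [twist s y2 (- d)]twist_gam0 ?gam_gamspanr // /w; abel.
Qed.

Local Notation N := (one_times (n := n) S).

Lemma one_times_cong p : N p -> cong p e.
Proof. by rewrite /cong /eqH /= intdiv.mod0z subr0. Qed.

Lemma cong_one_times p : cong p e -> N p.
Proof. by rewrite /cong /eqH /= intdiv.mod0z subr0. Qed.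

Lemma lcoset_cong p : set_eq (lcoset mul p N) (cong^~ p).
Proof.
move=> z; split=> [[a [/one_times_cong Na ->]] | /cong_sym zp].
  by rewrite -[X in cong _ X]sdmul1r; apply: cong_mulr.
rewrite -(sdmul1r p) in zp; have [r /cong_sym/cong_one_times Nr <-] := cong_mulr_div zp.
by exists r.
Qed.

Lemma rcoset_cong p : set_eq (rcoset mul N p) (cong^~ p).
Proof.
move=> z; split=> [[a [/one_times_cong Na ->]] | /cong_sym zp].
  by rewrite -[X in cong _ X]sdmul1l; apply: cong_mull.
rewrite -(sdmul1l p) in zp; have [r /cong_sym/cong_one_times Nr <-] := cong_mull_div zp.
by exists r.
Qed.

Lemma rrcoset_cong x y : set_eq (rrcoset mul N x y) (cong^~ (mul x y)).
Proof.
move=> z; split=> [[a [/one_times_cong Na ->]] | /cong_sym zp].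
  by apply: cong_mull; rewrite -[X in cong _ X]sdmul1l; apply: cong_mull.
have [r rx <-] := cong_mull_div zp; rewrite -(sdmul1l x) in rx.
by have [a /cong_sym/cong_one_times Na <-] := cong_mull_div rx; exists a.
Qed.

Lemma llcoset_cong y x : set_eq (llcoset mul y x N) (cong^~ (mul y x)).
Proof.
move=> z; split=> [[a [/one_times_cong Na ->]] | /cong_sym zp].
  by apply: cong_mulr; rewrite -[X in cong _ X]sdmul1r; apply: cong_mulr.
have [r rx <-] := cong_mulr_div zp; rewrite -(sdmul1r x) in rx.
by have [a /cong_sym/cong_one_times Na <-] := cong_mulr_div rx; exists a.
Qed.

Lemma cong_assoc p q r : ((0 < n)%N -> forall a, iter n g a = a) ->
  cong (mul p (mul q r)) (mul (mul p q) r).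
Proof.
move=> gn; case: p q r => [p1 x] [q1 y] [r1 z]; rewrite !sdmulE; split=> /=.
  by rewrite intdiv.modzDml intdiv.modzDmr addrA.
set j := sval q1; set k := sval r1.
have -> : gp (- intdiv.modz (j + k) n) x = gp (- k) (gp (- j) x).
  by rewrite -gpowD // -opprD addrC -(gpow_modz g_ginv ginv_g _ _ gn) intdiv.modzNm gpow_modz.
set t1 := twist _ y z; set t3 := twist _ x y; set t2 := twist _ x _; set t4 := twist _ _ z.
rewrite gpowD_span; last exact: twist_gamspan.
set u := gp (- j) x; set D := gp (- k) (u + y) - gp (- k) u - gp (- k) y.
have GD : gamspan D by case: (gpow_additive_mod (- k)) => _ _ _ gpB; exact: gpB.
have G3 : gamspan (gp (- k) t3) := gamspan_gpow _ (twist_gamspan _ _ _).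
apply: eqH_span.
have -> : gp (- k) u + (gp (- k) y + z + t1) + t2 - (gp (- k) (u + y) + gp (- k) t3 + z + t4)
          = t1 + t2 - t4 - D - gp (- k) t3 by rewrite /D; abel.
have G := gamspan_subgroup.
apply: (add_subgroupB G _ G3); apply: (add_subgroupB G _ GD).
apply: (add_subgroupB G); last exact: twist_gamspan.
by apply: (add_subgroupD G); apply: twist_gamspan.
Qed.

Lemma eqH_gpow_id k a : (forall b, H (b - g b)) -> eqH (gp k a) a.
Proof.
move=> H1g; have iter_id f m b : (forall c, eqH (f c) c) -> eqH (iter m f b) b.
  move=> fc; elim: m => [|m IHm] /=; [exact: eqH_refl | exact: eqH_trans (fc _) IHm].
case: k => m; apply: iter_id => c; first exact: eqH_sym (H1g c).
by rewrite /eqH -{2}(ginv_g c); apply: H1g.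
Qed.

Lemma cong_comm p q : (forall a, H (a - g a)) -> cong (mul p q) (mul q p).
Proof.
move=> H1g; case: p q => [p1 x] [q1 y]; rewrite !sdmulE; split=> /=; first by rewrite addrC.
apply: eqH_trans (eqH_spanD _ (twist_gamspan _ _ _)) _.
apply: eqH_sym; apply: eqH_trans (eqH_spanD _ (twist_gamspan _ _ _)) _.
by rewrite addrC; apply: eqH_add; [apply: eqH_sym | ]; apply: eqH_gpow_id.
Qed.

Lemma one_times_normal : normal_subloop mul e N.
Proof.
split.
  split=> [|a b /one_times_cong Na /one_times_cong Nb
          |a b x /one_times_cong Na /one_times_cong Nb ax_b
          |a b x /one_times_cong Na /one_times_cong Nb xa_b]; apply: cong_one_times.
  - exact: cong_refl.
  - by apply: (cong_trans _ Nb); rewrite -[X in cong _ X]sdmul1l; apply: cong_mull.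
  - apply: (cong_trans _ Nb); rewrite -ax_b -[X in cong X _]sdmul1l.
    by apply/cong_mull/cong_sym.
  - apply: (cong_trans _ Nb); rewrite -xa_b -[X in cong X _]sdmul1r.
    by apply/cong_mulr/cong_sym.
move=> x y; split.
- exact: set_eq_trans (lcoset_cong x) (set_eq_sym (rcoset_cong x)).
- exact: set_eq_trans (rrcoset_cong x y) (set_eq_sym (rcoset_cong (mul x y))).
- exact: set_eq_trans (llcoset_cong y x) (set_eq_sym (lcoset_cong (mul y x))).
Qed.

Lemma lcoset_eq p q : cong p q -> set_eq (lcoset mul p N) (lcoset mul q N).
Proof.
move=> pq z; have [lp pl] := lcoset_cong p z; have [lq ql] := lcoset_cong q z.
split=> [/lp zp | /lq zq]; first exact/ql/(cong_trans zp).
exact/pl/(cong_trans zq)/cong_sym.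
Qed.

Lemma one_times_quot_associative : ((0 < n)%N -> forall a, iter n g a = a) ->
  quot_associative mul N.
Proof. by move=> gn x y z; apply/lcoset_eq/cong_sym/cong_assoc. Qed.

Lemma one_times_quot_commutative : (forall a, H (a - g a)) -> quot_commutative mul N.
Proof. by move=> H1g x y; apply/lcoset_eq/cong_comm. Qed.

End Congruence.
End Loop.

Section Minimality.
Variable n : nat.
Local Notation Q := (Cyc n * X)%type.
Local Notation mul := (sdmul g ginv gam (n := n)).
Local Notation e := (sdone X n).
Local Notation c0 := (cyc_of n 0).
Variable M : Q -> Prop.
Hypothesis normM : normal_subloop mul e M.

Definition fiber x := M (c0, x).

Lemma fiber_subgroup : add_subgroup fiber.
Proof.
case: normM => [[M1 MM Mdivl _] _]; split=> [|a b Ma Mb|a Ma]; first exact: M1.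
  by rewrite /fiber -sdmul00; apply: MM.
by apply: (Mdivl _ _ _ Ma M1); rewrite sdmul00 subrr.
Qed.

Lemma lcoset_self p : lcoset mul p M p.
Proof. by exists e; split; [case: normM => [[]] | rewrite sdmul1r]. Qed.

Lemma fiber_lcoset s v u : lcoset mul (s, v) M (s, u) ->
  fiber (u - v - twist (Irange (sval s) 0) v u).
Proof.
case=> [[m1 w] [Mm]]; rewrite sdmulE /= => -[/(congr1 sval) /esym /cyc_addr_eq0 m10 ->].
rewrite m10 addr0 oppr0 /= twist_addr twist_addr [twist _ v v]twist_gam0 ?gam_alt // add0r.
rewrite [twist _ v (twist _ _ _)]twist_gam0 ?addr0; last exact: gam_gamspanr (twist_gamspan _ _ _).
have -> : v + w + twist (Irange (sval s) 0) v w - v - twist (Irange (sval s) 0) v w = w by abel.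
by rewrite /fiber -(cyc0P m10).
Qed.

Lemma one_times_sub S : (forall s, S s -> fiber s) -> set_sub (one_times (n := n) S) M.
Proof.
move=> Sfib [z1 z2] [/= /cyc0P-> Sz2].
exact: gen_subgroup_min fiber_subgroup Sfib _ Sz2.
Qed.

Section NonTrivialCycle.
Hypothesis n_neq1 : n != 1%N.
Local Notation c1 := (cyc_of n 1).

Lemma modz1 : intdiv.modz 1 n = 1.
Proof. by move: n_neq1; case: n => [|[|m]]. Qed.

Lemma sdmul01 x y : mul (c0, x) (c1, y) = (c1, ginv x + y + (g (gam x y) + gam x y)).
Proof.
by rewrite sdmulE /= intdiv.mod0z modz1 add0r Irange1N1 /twist !big_cons big_nil addr0.
Qed.

Lemma sdmul10 x y : mul (c1, x) (c0, y) = (c1, x + y + gam x y).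
Proof.
by rewrite sdmulE /= intdiv.mod0z modz1 addr0 oppr0 Irange10 /twist big_cons big_nil !addr0.
Qed.

Lemma fiber_lcoset1 v u : lcoset mul (c1, v) M (c1, u) -> fiber (u - v - gam v u).
Proof.
by move/fiber_lcoset; rewrite /= modz1 Irange10 /twist big_cons big_nil addr0.
Qed.

Lemma fiber_gam_of_associative : quot_associative mul M -> forall a b, fiber (gam a b).
Proof.
(* The associator of (1, g a), (1, g b), (b, 0) is ginv (ginv (gam a b)) = gam (g (g a)) b. *)
move=> assocM c b; set a := ginv (ginv c).
have E1 : mul (mul (c0, g a) (c0, g b)) (c1, 0) = (c1, ginv (g a + g b)).
  by rewrite sdmul00 sdmul01 gam0r g0 !addr0.
have E2 : mul (c0, g a) (mul (c0, g b) (c1, 0)) = (c1, a + b + (gam a b + ginv (gam a b))).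
  by rewrite sdmul01 gam0r g0 !addr0 g_ginv sdmul01 g_ginv g_gam g_ginv -C3.
have := proj1 (assocM (c0, g a) (c0, g b) (c1, 0) _) (lcoset_self _).
rewrite E1 E2 => /fiber_lcoset1; set u := ginv _; set v := a + b + _.
have uv : u - v = ginv (ginv (gam a b)) by rewrite /u C1 /v; abel.
have -> : gam v u = 0.
  rewrite -[u](subrK v) gam_addr gam_alt addr0 uv !C3.
  exact: gam_gamspanr (gamspan_gam _ _).
by rewrite subr0 uv !C3 /a !ginv_g.
Qed.

Lemma fiber_commutator x y : quot_commutative mul M ->
  fiber (ginv x - x - gam x (ginv x) - gam x y).
Proof.
move=> commM; have := proj1 (commM (c0, x) (c1, y) _) (lcoset_self _).
rewrite sdmul01 sdmul10 => /fiber_lcoset1.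
set u := ginv x + y + _; set v := y + x + _.
have gam_vu : gam v u = gam (ginv x) y + gam x (ginv x) + gam x y.
  rewrite /u /v g_gam !gam_addl !gam_addr !C2 !gam_gamr gam_alt !addr0 (gam_sym y (ginv x)).
  by abel.
rewrite gam_vu /u /v g_gam (gam_sym y x).
by congr fiber; abel.
Qed.

Lemma fiber_gam_of_commutative : quot_commutative mul M -> forall a b, fiber (gam a b).
Proof.
move=> commM a b.
have := add_subgroupB fiber_subgroup (fiber_commutator a 0 commM) (fiber_commutator a b commM).
by rewrite gam0r subr0; congr fiber; abel.
Qed.

Lemma fiber_1mg_of_commutative : quot_commutative mul M -> forall z, fiber (z - g z).
Proof.
move=> commM z; have := add_subgroupD fiber_subgroup (fiber_commutator (g z) 0 commM)
                                     (fiber_gam_of_commutative commM (g z) z).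
by rewrite gam0r subr0 g_ginv; congr fiber; abel.
Qed.

End NonTrivialCycle.
End Minimality.

Definition commgens z := Img_gam gam z \/ Img_1mg g z.

Lemma gamspan_commgens c : gamspan c -> gen_subgroup commgens c.
Proof. by apply: gen_subgroup_mono => s; left. Qed.

Lemma gen_commgens_stable f : additive_mod gamspan f ->
  (forall x y, exists x', f (gam x y) = gam x' y) ->
  (forall x, exists x', f x - f (g x) = x' - g x') ->
  forall c, gen_subgroup commgens c -> gen_subgroup commgens (f c).
Proof.
move=> addf f_gam f_1mg; have subD := gen_subgroup_subgroup commgens.
suff Sf s : commgens s -> gen_subgroup commgens (f s).
  exact: additive_mod_gen gamspan_commgens Sf addf.
case=> [[x [y ->]] | [x ->]].
  by have [x' ->] := f_gam x y; apply: gen_subgroup_in; left; exists x', y.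
have [x' fx'] := f_1mg x.
rewrite -[f _](subrK (f x - f (g x))) addrC.
apply: (add_subgroupD subD); first by rewrite fx'; apply: gen_subgroup_in; right; exists x'.
exact: gamspan_commgens _ (additive_modB gamspan_subgroup _ _ addf).
Qed.

Section Subloops.
Variable n : nat.
Hypothesis Hn : (0 < n)%N -> order_divides g n /\ r_divides g gam n.
Local Notation mul := (sdmul g ginv gam (n := n)).
Local Notation e := (sdone X n).

Lemma iter_period : (0 < n)%N -> forall a, iter n g a = a.
Proof.
move=> n_gt0; have [[m [_ gm _ /dvdnP [q ->]]] _] := Hn n_gt0.
by elim: q => [|q IHq] a //; rewrite mulSn ssrnat.iterD IHq gm.
Qed.

Lemma trivial_twist : n = 1%N -> (forall x, g x = x) /\ (forall a b, gam a b = 0).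
Proof.
move=> n1; have n_gt0 : (0 < n)%N by rewrite n1.
have [[m [_ gm _ m1]] [r [_ radr _ r1]]] := Hn n_gt0.
move: m1 r1; rewrite n1 !dvdn1 => /eqP m1 /eqP r1; subst m r.
by split=> [x | a b]; [apply: gm | have := radr a b; rewrite big_ord1].
Qed.

Lemma fiber_gam_of_group M : normal_subloop mul e M -> quot_group mul M ->
  forall a b, fiber M (gam a b).
Proof.
move=> normM assocM a b; have [n1 | n_neq1] := eqVneq n 1%N.
  by rewrite (trivial_twist n1).2; apply: add_subgroup0 (fiber_subgroup normM).
exact: fiber_gam_of_associative.
Qed.

Lemma fiber_commgens_of_commutative M :
  normal_subloop mul e M -> quot_commutative mul M -> forall s, commgens s -> fiber M s.
Proof.
move=> normM commM s; have [n1 | n_neq1] := eqVneq n 1%N.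
  have [g1 gam0] := trivial_twist n1.
  case=> [[a [b ->]] | [x ->]]; rewrite ?gam0 ?g1 ?subrr;
    exact: add_subgroup0 (fiber_subgroup normM).
case=> [[a [b ->]] | [x ->]]; first exact: fiber_gam_of_commutative.
exact: fiber_1mg_of_commutative.
Qed.

Lemma associator_subloop_sdprod :
  is_associator_subloop mul e (one_times (n := n) (Img_gam gam)).
Proof.
split=> [| |M normM assocM].
- by apply: one_times_normal => //; [exact: gamspan_g | exact: gamspan_ginv].
- by apply: one_times_quot_associative => //; exact: iter_period.
- by apply: one_times_sub => // _ [a [b ->]]; apply: fiber_gam_of_group.
Qed.

Lemma gamspan_sub_commgens :
  set_sub (one_times (n := n) (Img_gam gam)) (one_times (n := n) commgens).
Proof. by move=> z [z10 Gz]; split=> //; apply: gamspan_commgens. Qed.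

Lemma commgens_normal : normal_subloop mul e (one_times (n := n) commgens).
Proof.
apply: one_times_normal; first exact: gamspan_commgens.
  apply: gen_commgens_stable g_additive_mod _ _ => [x y | x]; last by exists (g x).
  by exists (ginv x); exact: g_gam.
apply: gen_commgens_stable ginv_additive_mod _ _ => [x y | x]; first by exists (g x); exact: C3.
by exists (ginv x); rewrite g_ginv ginv_g.
Qed.

Lemma commgens_quot_commutative : quot_commutative mul (one_times (n := n) commgens).
Proof.
apply: one_times_quot_commutative; first exact: gamspan_commgens.
by move=> x; apply: gen_subgroup_in; right; exists x.
Qed.

Lemma commutator_subloop_sdprod : is_commutator_subloop mul e (one_times (n := n) commgens).
Proof.
split=> [| |M normM commM]; [exact: commgens_normal | exact: commgens_quot_commutative |].
exact: one_times_sub (fiber_commgens_of_commutative normM commM).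
Qed.

Lemma derived_subloop_sdprod : is_derived_subloop mul e (one_times (n := n) commgens).
Proof.
split=> [| |M normM [_ commM]]; first exact: commgens_normal.
  split; last exact: commgens_quot_commutative.
  apply: one_times_quot_associative; first exact: gamspan_commgens.
  exact: iter_period.
exact: one_times_sub (fiber_commgens_of_commutative normM commM).
Qed.

End Subloops.
End ConstructionPair.

Unset Implicit Arguments. Set Strict Implicit.

Theorem mainTheorem6 (X : zmodType) (g ginv : X -> X) (gam : X -> X -> X) (n : nat)
  (g_ginv : cancel g ginv) (ginv_g : cancel ginv g)
  (gam_sym : forall x y, gam x y = gam y x)
  (gam_alt : forall x, gam x x = 0)
  (gam_addl : forall x y z, gam (x + y) z = gam x z + gam y z)
  (gam_addr : forall x y z, gam x (y + z) = gam x y + gam x z)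
  (C1 : forall x y, ginv (g x + g y)
          = x + y + gam x y + ginv (gam x y) + ginv (ginv (gam x y)))
  (C2 : forall x y z, gam (gam x y) z = 0)
  (C3 : forall x y, ginv (gam x y) = gam (g x) y)
  (Hn : (0 < n)%N -> order_divides g n /\ r_divides g gam n) :
  let mul := sdmul g ginv gam (n := n) in
  let e := sdone X n in
  let A := one_times (n := n) (Img_gam gam) in
  let D := one_times (n := n) (fun z => Img_gam gam z \/ Img_1mg g z) in
  [/\ is_associator_subloop mul e A,
      set_sub A D,
      is_commutator_subloop mul e D &
      is_derived_subloop mul e D].
Proof.
split.
- exact: associator_subloop_sdprod.
- exact: gamspan_sub_commgens.
- exact: commutator_subloop_sdprod.
- exact: derived_subloop_sdprod.
Qed.
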